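(* Let $\mu$ be a bounded signed Borel measure on a Hausdorff space ${\mathscr X}$ and let ${\mathscr A}$ be a set of finite Borel partitions of ${\mathscr X}$, directed under refinement. Then $\alpha\mapsto\|\mu_\alpha\|_{1,\alpha}=\sum_{A\in\alpha}|\mu(A)|$ is monotone increasing on ${\mathscr A}$ (i.e. $\alpha\le\beta$ implies $\|\mu_\alpha\|_{1,\alpha}\le\|\mu_\beta\|_{1,\beta}$). If moreover ${\mathscr A}$ resolves ${\mathscr X}$, then $$\|\mu\|_{1}=|\mu|({\mathscr X})=\sup_{\alpha\in{\mathscr A}}\sum_{A\in\alpha}|\mu(A)|.$$
   Context: A (finite Borel) partition $\alpha$ of ${\mathscr X}$ is a finite collection of non-empty, pairwise disjoint Borel sets with union ${\mathscr X}$. $\alpha\le\beta$ means $\beta$ refines $\alpha$. ${\mathscr A}$ resolves ${\mathscr X}$ if the $\sigma$-algebra generated by all sets occurring in partitions of ${\mathscr A}$ is the Borel $\sigma$-algebra. For a signed measure $\mu$, $\mu_\alpha=(\mu(A))_{A\in\alpha}$ is its $\alpha$-histogram. *)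

From HB Require Import structures.
From mathcomp Require Import all_boot all_order all_algebra.
From mathcomp Require Import all_classical all_reals all_analysis.
Set Implicit Arguments. Unset Strict Implicit. Unset Printing Implicit Defensive.
Import Order.TTheory GRing.Theory Num.Theory.
Local Open Scope classical_set_scope.
Local Open Scope ring_scope.

Notation borel X := (g_sigma_algebraType (@open X)).

Section partitions.
Context d (T : measurableType d).

Definition fin_partition (a : set (set T)) : Prop :=
  [/\ finite_set a,
      (forall A, a A -> measurable A /\ A !=set0),
      (forall A B, a A -> a B -> A <> B -> A `&` B = set0) &
      \bigcup_(A in a) A = setT].

(* refines a b : b refines a  (written a <= b in the paper) *)
Definition refines (a b : set (set T)) : Prop :=
  forall B, b B -> exists A, a A /\ B `<=` A.

Definition directed_refinement (AA : set (set (set T))) : Prop :=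
  AA !=set0 /\
  forall a b, AA a -> AA b -> exists c, [/\ AA c, refines a c & refines b c].

Definition resolves (AA : set (set (set T))) : Prop :=
  <<s \bigcup_(a in AA) a >> = measurable.

Definition hist_norm1 (R : realType) (mu : set T -> \bar R) (a : set (set T))
  : \bar R := (\sum_(A \in a) `|mu A|)%E.

End partitions.

From HB Require Import structures.
From mathcomp Require Import all_boot all_order all_algebra.
From mathcomp Require Import all_classical all_reals all_analysis.
From mathcomp Require Import lra.
Import Order.TTheory GRing.Theory Num.Theory.
Local Open Scope classical_set_scope.
Local Open Scope ring_scope.
Set Implicit Arguments. Unset Strict Implicit. Unset Printing Implicit Defensive.

(* Refining a partition splits each block, so by the triangle inequality the
   histogram norm can only grow; and every histogram norm is at most |mu|(X).
   Conversely, directedness makes the unions of blocks of a single partition of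
   AA an algebra, which generates the Borel sets when AA resolves X.  By the
   pi-lambda theorem the positive Hahn set P is then approximated in |mu|-measure
   by such a union E, and the partition behind E has histogram norm at least
   |mu(E)| + |mu(~E)| >= |mu|(X) - 2 |mu|(P (+) E). *)

Lemma measurableY d (T : ringOfSetsType d) (A B : set T) :
  measurable A -> measurable B -> measurable (A `+` B).
Proof. by move=> mA mB; apply: measurableU; exact: measurableD. Qed.

Section symmetric_difference.
Context (T : Type).
Implicit Types (A B E F : set T).

Lemma setY_setD_subset A B E F :
  (A `\` B) `+` (E `\` F) `<=` (A `+` E) `|` (B `+` F).
Proof.
move=> x /=.
have [Ax|?] := pselect (A x); have [Bx|?] := pselect (B x);
have [Ex|?] := pselect (E x); have [Fx|?] := pselect (F x); tauto.
Qed.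

Lemma setY_bigcup_subset (F : (set T)^nat) n E :
  (\bigcup_i F i) `+` E `<=` (\bigcup_i F i `\` F n) `|` (F n `+` E).
Proof.
move=> x [[[i _ Fix] nEx]|[Ex nFx]]; last first.
  by right; right; split=> // Fnx; apply: nFx; exists n.
by have [Fnx|nFnx] := pselect (F n x); [right; left|left; split=> //; exists i].
Qed.

End symmetric_difference.

Definition saturated T (a : set (set T)) (E : set T) :=
  forall A, a A -> A `<=` E \/ A `<=` ~` E.

Section approximation_by_algebra.
Context d (T : measurableType d) (R : realType).
Variables (nu : {measure set T -> \bar R}) (G : set (set T)).
Hypotheses (nu_fin : fin_num_fun nu) (GT : G setT) (GI : setI_closed G)
  (GC : setC_closed G) (Gm : G `<=` measurable).
Local Open Scope ereal_scope.

Definition approximable (A : set T) := measurable A /\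
  forall e : R, (0 < e)%R -> exists2 E, G E & nu (A `+` E) < e%:E.

Lemma approximable_alg A : G A -> approximable A.
Proof.
move=> GA; split=> [|e e0]; first exact: Gm.
by exists A => //; rewrite setYK measure0 lte_fin.
Qed.

Lemma approximable_setD A B :
  approximable A -> approximable B -> approximable (A `\` B).
Proof.
move=> [mA appA] [mB appB]; split=> [|e e0]; first exact: measurableD.
have e2 : (0 < e / 2)%R by rewrite divr_gt0.
have [EA GEA nuA] := appA _ e2; have [EB GEB nuB] := appB _ e2.
have mEA := Gm GEA; have mEB := Gm GEB.
exists (EA `\` EB); first by rewrite setDE; apply: GI => //; exact: GC.
rewrite (splitr e) EFinD; apply: le_lt_trans (lteD nuA nuB).
apply: le_trans (measureU2 _ (measurableY _ _) (measurableY _ _)) => //.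
apply: le_measure; rewrite ?inE; last exact: setY_setD_subset.
  by apply: measurableY; exact: measurableD.
by apply: measurableU; exact: measurableY.
Qed.

Lemma approximable_ndseq : ndseq_closed approximable.
Proof.
move=> F ndF appF; have mF i := (appF i).1.
have mUF : measurable (\bigcup_i F i) by exact: bigcupT_measurable.
split=> // e e0; have e2 : (0 < e / 2)%R by rewrite divr_gt0.
pose rest n := \bigcup_i F i `\` F n.
have mrest n : measurable (rest n) by exact: measurableD.
have rest0 : nu \o rest @ \oo --> nu (\bigcap_n rest n).
  apply: nonincreasing_cvg_mu => //; first by rewrite ltey_eq nu_fin.
    exact: bigcapT_measurable.
  move=> m n mn; apply/subsetPset; apply: setDS; apply/subsetPset; exact: ndF.
have cap_rest : \bigcap_n rest n = set0.
  apply/seteqP; split=> // x restx.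
  by have [[k _ Fkx] _] := restx 0%N I; have [] := restx k I.
rewrite cap_rest measure0 in rest0.
have [M _ restM] : \forall n \near \oo, nu (rest n) < (e / 2)%:E.
  apply: (rest0 [set y | y < (e / 2)%:E]); apply: open_nbhs_nbhs.
  by split; [exact: open_ereal_lt_ereal|rewrite /= lte_fin].
have [E GE nuE] := (appF M).2 _ e2.
exists E => //; rewrite (splitr e) EFinD.
apply: le_lt_trans (lteD (restM M (leqnn M)) nuE).
apply: le_trans (measureU2 _ (mrest M) (measurableY (mF M) (Gm GE))).
apply: le_measure; rewrite ?inE; last exact: setY_bigcup_subset.
  exact: measurableY (Gm GE).
by apply: measurableU => //; exact: measurableY (Gm GE).
Qed.

Lemma sigma_algebra_approximable : <<s G>> `<=` approximable.
Proof.
apply: lambda_system_subset => //; last exact: approximable_alg.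
split=> //; first exact: approximable_alg.
by move=> A B _; exact: approximable_setD.
exact: approximable_ndseq.
Qed.

End approximation_by_algebra.

Section charge_finite_additivity.
Context d (T : ringOfSetsType d) (R : realFieldType).
Variable mu : {charge set T -> \bar R}.
Local Open Scope ereal_scope.

Lemma charge_bigsetU_seq (I : eqType) (s : seq I) (F : I -> set T) :
  uniq s -> {in s &, forall i j, i != j -> F i `&` F j = set0} ->
  {in s, forall i, measurable (F i)} ->
  mu (\big[setU/set0]_(i <- s) F i) = \sum_(i <- s) mu (F i).
Proof.
elim: s => [|i s IHs]; first by rewrite !big_nil charge0.
move=> /andP[isn suniq] tF mF.
have mem_tail j : j \in s -> j \in i :: s by rewrite inE => ->; rewrite orbT.
rewrite !big_cons chargeU.
- rewrite IHs // => [j k /mem_tail js /mem_tail ks|j /mem_tail js].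
    exact: tF.
  exact: mF.
- exact/mF/mem_head.
- by rewrite big_seq; apply: bigsetU_measurable => j /mem_tail; exact: mF.
rewrite big_distrr /= big1_seq // => j /andP[_ js].
by apply: tF; [exact: mem_head|exact: mem_tail|apply: contraNneq isn => ->].
Qed.

Lemma charge_fin_bigcup (I : choiceType) (D : set I) (F : I -> set T) :
  finite_set D -> trivIset D F -> (forall i, D i -> measurable (F i)) ->
  mu (\bigcup_(i in D) F i) = \sum_(i \in D) mu (F i).
Proof.
move=> finD tF mF; rewrite -bigsetU_fset_set // fsbig_finite //.
apply: charge_bigsetU_seq => [//|i j|i]; rewrite ?in_fset_set ?inE //.
  by move=> Di Dj; move/trivIsetP: tF; apply.
exact: mF.
Qed.

End charge_finite_additivity.

Section charge_on_partitions.
Context d (T : measurableType d) (R : realType).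
Variable mu : {charge set T -> \bar R}.
Local Open Scope ereal_scope.

Lemma charge_partition_sum a F : fin_partition a -> measurable F ->
  mu F = \sum_(A \in a) mu (A `&` F).
Proof.
move=> [fina ma disja cova] mF; rewrite -charge_fin_bigcup //.
- by rewrite -setI_bigcupl cova setTI.
- apply/trivIsetP => A B aA aB /eqP AB.
  by rewrite setIACA setIid (disja A B aA aB AB) set0I.
- by move=> A /ma[mA _]; exact: measurableI.
Qed.

Lemma abse_le_partition_sum a F : fin_partition a -> measurable F ->
  `|mu F| <= \sum_(A \in a) `|mu (A `&` F)|.
Proof.
move=> pa mF; have [fina _ _ _] := pa.
by rewrite (charge_partition_sum pa mF) !fsbig_finite //; exact: lee_abs_sum.
Qed.

Lemma partition_sum_abse_block a B :
  fin_partition a -> (exists2 A0, a A0 & B `<=` A0) ->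
  \sum_(A \in a) `|mu (B `&` A)| = `|mu B|.
Proof.
move=> [fina _ disja _] [A0 aA0 BA0]; rewrite (fsbigD1 A0) //= setIidl //.
rewrite fsbig1 ?adde0 // => A [aA AA0].
suff -> : B `&` A = set0 by rewrite charge0 abse0.
by rewrite -(setIidl BA0) -setIA (disja A0 A) ?setI0 //; exact: nesym.
Qed.

Lemma hist_norm1_le_refines a b : fin_partition a -> fin_partition b ->
  refines a b -> hist_norm1 mu a <= hist_norm1 mu b.
Proof.
move=> pa pb ab; have [fina ma _ _] := pa; have [finb mb _ _] := pb.
apply: (@le_trans _ _ (\sum_(A \in a) \sum_(B \in b) `|mu (B `&` A)|)).
  by apply: lee_fsum => // A /ma[mA _]; exact: abse_le_partition_sum.
rewrite exchange_fsbig //; apply: lee_fsum => // B bB.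
rewrite (partition_sum_abse_block pa) //.
by have [A0 [aA0 BA0]] := ab B bB; exists A0.
Qed.

Lemma abse_setC_le_hist_norm1 c E : fin_partition c -> measurable E ->
  saturated c E -> `|mu E| + `|mu (~` E)| <= hist_norm1 mu c.
Proof.
move=> pc mE Esat; have [finc _ _ _] := pc.
apply: le_trans (leeD (abse_le_partition_sum pc mE)
  (abse_le_partition_sum pc (measurableC mE))) _.
rewrite -fsbig_split //=; apply: lee_fsum => // C cC.
case: (Esat C cC) => CE.
  have CCE : C `&` ~` E = set0 by apply/disjoints_subset; rewrite setCK.
  by rewrite setIidl // CCE charge0 abse0 adde0.
have CE0 : C `&` E = set0 by apply/disjoints_subset.
by rewrite CE0 setIidl // charge0 abse0 add0e.
Qed.

End charge_on_partitions.

Section charge_variation_bounds.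
Context d (T : measurableType d) (R : realType).
Variables (mu : {charge set T -> \bar R}) (P N : set T).
Variable muPN : hahn_decomposition mu P N.
Local Open Scope ereal_scope.
Local Notation var := (charge_variation muPN).
Local Notation jp := (jordan_pos muPN).
Local Notation jn := (jordan_neg muPN).

Lemma hist_norm1_le_charge_variation a :
  fin_partition a -> hist_norm1 mu a <= var setT.
Proof.
move=> pa; have [fina ma _ _] := pa.
rewrite (charge_partition_sum var pa measurableT).
apply: lee_fsum => // A /ma[mA _].
by rewrite setIT; exact: abse_charge_variation.
Qed.

Lemma jordan_neg_add_pos_setC_le E : measurable E ->
  jn E + jp (~` E) <= var (P `+` E).
Proof.
move=> mE; have [[mP _] [mN _] _ PN0] := muPN.
rewrite /setY measureU; last 3 first.
- exact: measurableD.
- exact: measurableD.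
- by apply/seteqP; split=> // x [[Px nEx] [Ex _]].
rewrite addeC; apply: leeD.
  rewrite jordan_posE cjordan_posE /crestr0 mem_set; last exact: measurableC.
  have mCEP : measurable (~` E `&` P) by exact: measurableI (measurableC mE) mP.
  apply: le_trans (lee_abs _) _.
  apply: le_trans (abse_charge_variation muPN mCEP) _.
  apply: le_measure; rewrite ?inE //; first exact: measurableD.
  by move=> x [nEx Px].
rewrite jordan_negE cjordan_negE /crestr0 mem_set //.
have mEN : measurable (E `&` N) by exact: measurableI.
apply: le_trans (le_trans _ (abse_charge_variation muPN mEN)) _.
  by rewrite -abseN lee_abs.
apply: le_measure; rewrite ?inE //; first exact: measurableD.
by move=> x [Ex Nx]; split=> // Px; have : (P `&` N) x by []; rewrite PN0.
Qed.

Lemma charge_jordanE A : measurable A -> mu A = jp A - jn A.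
Proof. by move=> mA; rewrite (jordan_decomp muPN mA) /cadd /= cscaleN1. Qed.

Lemma charge_variation_setT_le E : measurable E ->
  var setT <= `|mu E| + `|mu (~` E)| + (var (P `+` E) + var (P `+` E)).
Proof.
move=> mE; have mCE := measurableC mE.
have err := jordan_neg_add_pos_setC_le mE.
have muCE : - mu (~` E) <= `|mu (~` E)| by rewrite -abseN lee_abs.
apply: le_trans (leeD (leeD (lee_abs _) muCE) (leeD err err)).
have -> : var setT = var E + var (~` E).
  by rewrite -measureU ?setUv ?setICr.
have varE A : var A = jp A + jn A by [].
rewrite !varE !charge_jordanE //.
rewrite -[jp E]fineK ?fin_num_measure // -[jn E]fineK ?fin_num_measure //.
rewrite -[jp (~` E)]fineK ?fin_num_measure // -[jn (~` E)]fineK ?fin_num_measure //.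
by rewrite -!EFinN -!EFinD lee_fin; lra.
Qed.

Lemma charge_variation_setT_le_hist_norm1 c E : fin_partition c ->
  measurable E -> saturated c E ->
  var setT <= hist_norm1 mu c + (var (P `+` E) + var (P `+` E)).
Proof.
move=> pc mE cE; apply: le_trans (charge_variation_setT_le mE) _.
by rewrite leeD2r // abse_setC_le_hist_norm1.
Qed.

End charge_variation_bounds.

Definition partition_algebra d (T : measurableType d)
    (AA : set (set (set T))) : set (set T) :=
  [set E | measurable E /\ exists2 a, AA a & saturated a E].

Section partition_algebra.
Context d (T : measurableType d) (AA : set (set (set T))).
Hypotheses (AApart : forall a, AA a -> fin_partition a)
  (AAdir : directed_refinement AA).
Local Notation alg := (partition_algebra AA).

Lemma saturated_refines (a b : set (set T)) E :
  saturated a E -> refines a b -> saturated b E.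
Proof.
move=> aE ab B bB; have [A [aA BA]] := ab B bB.
by case: (aE A aA) => AE; [left|right]; exact: subset_trans AE.
Qed.

Lemma partition_algebra_setT : alg setT.
Proof. by have [[a AAa] _] := AAdir; split=> //; exists a => // A _; left. Qed.

Lemma partition_algebra_setC : setC_closed alg.
Proof.
move=> E [mE [a AAa aE]]; split; first exact: measurableC.
by exists a => // A /aE[]; [right; rewrite setCK|left].
Qed.

Lemma partition_algebra_setI : setI_closed alg.
Proof.
move=> E F [mE [a AAa aE]] [mF [b AAb bF]]; split; first exact: measurableI.
have [c [AAc ac bc]] := AAdir.2 _ _ AAa AAb; exists c => // C cC.
case: (saturated_refines aE ac cC) => CE; last by right=> x /CE + [].
case: (saturated_refines bF bc cC) => CF; last by right=> x /CF + [].
by left=> x Cx; split; [exact: CE|exact: CF].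
Qed.

Lemma partition_algebra_block a A : AA a -> a A -> alg A.
Proof.
move=> AAa aA; have [_ ma disja _] := AApart AAa.
split; first exact: (ma A aA).1; exists a => // C aC.
have [->|CA] := pselect (C = A); first by left.
by right=> x Cx Ax; have : (C `&` A) x by []; rewrite disja.
Qed.

Lemma resolves_partition_algebra : resolves AA -> measurable `<=` <<s alg >>.
Proof.
move=> resAA; rewrite -resAA; apply: sub_sigma_algebra2 => A [a AAa aA].
exact: partition_algebra_block AAa aA.
Qed.

End partition_algebra.

Section variation_as_supremum.
Context d (T : measurableType d) (R : realType).
Variables (mu : {charge set T -> \bar R}) (P N : set T).
Variable muPN : hahn_decomposition mu P N.
Variable AA : set (set (set T)).
Hypotheses (AApart : forall a, AA a -> fin_partition a)
  (AAdir : directed_refinement AA) (AAres : resolves AA).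
Local Open Scope ereal_scope.

Lemma charge_variation_ereal_sup_hist_norm1 :
  charge_variation muPN setT = ereal_sup [set hist_norm1 mu a | a in AA].
Proof.
apply/eqP; rewrite eq_le; apply/andP; split; last first.
  apply/ereal_supP => _ [a AAa <-].
  exact/hist_norm1_le_charge_variation/AApart.
apply/lee_addgt0Pr => e e0; have e2 : (0 < e / 2)%R by rewrite divr_gt0.
have [[mP _] _ _ _] := muPN.
have PE : approximable (charge_variation muPN) (partition_algebra AA) P.
  apply: sigma_algebra_approximable.
  - by move=> A mA; exact: fin_num_measure.
  - exact: partition_algebra_setT AAdir.
  - exact: partition_algebra_setI AAdir.
  - exact: partition_algebra_setC.
  - by move=> A [].
  - exact: resolves_partition_algebra AApart AAres _ mP.
have [E [mE [c AAc cE]] varPE] := PE.2 _ e2.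
apply: le_trans (charge_variation_setT_le_hist_norm1 muPN (AApart AAc) mE cE) _.
apply: leeD; first by apply: ereal_sup_ubound; exists c.
by rewrite (splitr e) EFinD; apply: leeD; exact: ltW.
Qed.

End variation_as_supremum.

Theorem mainTheorem2 (R : realType) (X : ptopologicalType)
  (mu : {charge set (borel X) -> \bar R})
  (AA : set (set (set (borel X)))) :
  hausdorff_space X ->
  (forall a, AA a -> fin_partition a) ->
  directed_refinement AA ->
  (forall a b, AA a -> AA b -> refines a b ->
     (hist_norm1 mu a <= hist_norm1 mu b)%E) /\
  (resolves AA ->
   forall (P N : set (borel X)) (muPN : hahn_decomposition mu P N),
     charge_variation muPN setT =
       ereal_sup [set hist_norm1 mu a | a in AA]).
Proof.
move=> _ AApart AAdir; split=> [a b AAa AAb|AAres P N muPN].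
  by apply: hist_norm1_le_refines; exact: AApart.
exact: charge_variation_ereal_sup_hist_norm1.
Qed.
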